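(* In the setting of the context, let $\ell\in L$, $G_d=(U_d\mid T_d\mid F_d)$ (the matrix $M^{\Delta,H}_d$ with block $R_d$ removed) and $G_{d,I(\ell)}$ its submatrix of rows indexed by $I(\ell)$. Then $$H_d(\ell)=\Big\{[z]\in H_d\ \Big|\ z\in Z_d \text{ has } z^\Delta=U_d\upsilon+T_d\tau+F_d\varphi \text{ with } \begin{pmatrix}\upsilon\\\tau\\\varphi\end{pmatrix}\in\ker G_{d,I(\ell)}\Big\},$$ where, under the isomorphism $H_d\cong\bigoplus_{i=1}^{n_T}\mathbb{D}/(a^d_i)\oplus\mathbb{D}^{n_F}$, such a class $[z]$ has coordinates $(\pi^d(\tau),\varphi)$, $\pi^d$ being the componentwise projections $\mathbb{D}\to\mathbb{D}/(a^d_i)$.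
   Context: $(L,\leq)$ is a CDL (poset with all joins and meets, distributing over each other; least element $0$). $\Delta$ is a finite simplicial complex, $\mathbb{D}$ a PID, $\mu:\Delta\to L$ an $L$-fuzzy subcomplex ($\mu(\sigma_1)\geq\mu(\sigma_2)$ whenever $\sigma_1$ is a face of $\sigma_2$). $\sigma^d_1,\dots,\sigma^d_{n_d}$ are the positively oriented $d$-simplices, $C_d$ the free $\mathbb{D}$-module on them, $c^\Delta$ the coordinate vector; $Z_d=\ker\partial_d$, $B_d=\operatorname{im}\partial_{d+1}$, $H_d=Z_d/B_d$. Reduced bases: fix bases $E^H_d$ of $C_d$ with change-of-basis matrices $M^{\Delta,H}_d$ (columns = simplex-coordinates of elements of $E^H_d$) such that the matrix $D_d$ of $\partial_d$ w.r.t. $E^H_d,E^H_{d-1}$ has the form $(0_{n_{d-1}\times r_{d+1}}\mid D'_d)$, $r_{d+1}=\operatorname{rank}\partial_{d+1}$, the only nonzero entries of $D'_d$ being its first $r_d$ diagonal entries, successively dividing. Elements of $E^H_d$ are of type U (column in $D_d$ zero, row in $D_{d+1}$ has a unit entry), T (column zero, row has a nonzero non-unit entry), R (column nonzero) or F (column zero, row zero), ordered U,T,R,F; $M^{\Delta,H}_d=(U_d\mid T_d\mid R_d\mid F_d)$ with $n_U,n_T,n_R,n_F$ columns; $a^d_1,\dots,a^d_{n_T}$ are the nonzero row entries of the T generators and $A_d=\operatorname{diag}(a^d_i)$. Then $Z_d$ consists of the chains with coordinates $U_d\upsilon+T_d\tau+F_d\varphi$, $B_d$ of those with coordinates $U_d\upsilon+T_dA_d\tau$,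 and $[z]\mapsto(\pi^d(\tau),\varphi)$ is an isomorphism $H_d\cong\bigoplus_i\mathbb{D}/(a^d_i)\oplus\mathbb{D}^{n_F}$. Constraint system: $S(c,I)$ is $(U_d\mid T_dA_d)_I\binom{\upsilon}{\tau}=-c^\Delta_I$ in unknowns $\upsilon\in\mathbb{D}^{n_U},\tau\in\mathbb{D}^{n_T}$ (rows indexed by $I$). $I(\ell)=\{i\mid\mu(\sigma^d_i)\not\geq\ell\}$. $H_d(\ell)=\{[h]\in H_d\mid S(h,I(\ell))\text{ solvable}\}$ (independent of the representative $h\in Z_d$). *)

From HB Require Import structures.
From mathcomp Require Import all_boot all_order all_algebra.
Set Implicit Arguments. Unset Strict Implicit. Unset Printing Implicit Defensive.
Import Order.Theory GRing.Theory.
Local Open Scope ring_scope.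

Definition dvdr (D : idomainType) (a b : D) : Prop := exists c : D, b = c * a.

Definition ideal_pred (D : idomainType) (P : D -> Prop) : Prop :=
  P 0 /\ (forall x y, P x -> P y -> P (x + y)) /\ (forall s x, P x -> P (s * x)).

Definition is_PID (D : idomainType) : Prop :=
  forall P : D -> Prop, ideal_pred P -> exists a : D, forall x, P x <-> dvdr a x.

Definition complete_lattice (disp : Order.disp_t) (L : porderType disp) : Prop :=
  forall P : L -> Prop, exists s : L,
    (forall x, P x -> (x <= s)%O) /\ (forall u, (forall x, P x -> (x <= u)%O) -> (s <= u)%O).

(* A simplex is a nonempty finite set of vertices; a k-simplex has k+1 vertices. *)
Definition is_simplicial_complex (N : nat) (K : {set {set 'I_N}}) : Prop :=
  set0 \notin K /\
  (forall s t : {set 'I_N}, s \in K -> t \subset s -> t != set0 -> t \in K).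

(* simplices with exactly c vertices, i.e. (c-1)-simplices *)
Definition simp (N : nat) (K : {set {set 'I_N}}) (c : nat) : {set {set 'I_N}} :=
  [set s in K | #|s| == c].

Definition nsimp (N : nat) (K : {set {set 'I_N}}) (c : nat) : nat := #|simp K c|.

Definition is_numbering (N : nat) (K : {set {set 'I_N}})
  (sg : forall c : nat, 'I_(nsimp K c) -> {set 'I_N}) : Prop :=
  forall c, injective (sg c) /\ (forall i, sg c i \in simp K c).

(* Boundary matrix from chains on simplices with c+1 vertices to chains on
   simplices with c vertices (i.e. the paper's boundary map d_c, from
   c-chains to (c-1)-chains), w.r.t. the positively oriented simplices
   (vertices in increasing order):
   d [v_0 < ... < v_c] = sum_i (-1)^i [v_0 .. ^v_i .. v_c]. *)
Definition bdry (D : idomainType) (N : nat) (K : {set {set 'I_N}})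
  (sg : forall c : nat, 'I_(nsimp K c) -> {set 'I_N}) (c : nat)
  : 'M[D]_(nsimp K c, nsimp K c.+1) :=
  \matrix_(i, j)
    (if sg c i \subset sg c.+1 j then
       (-1) ^+ (\sum_(v in sg c.+1 j :\: sg c i) #|[set w in sg c.+1 j | (w < v)%N]|)%N
     else 0).

Definition fuzzy_subcomplex (disp : Order.disp_t) (L : porderType disp)
  (N : nat) (K : {set {set 'I_N}}) (mu : {set 'I_N} -> L) : Prop :=
  forall s t : {set 'I_N}, s \in K -> t \in K -> s \subset t -> (mu t <= mu s)%O.

(* I(l) for d-simplices (d+1 vertices): indices i with mu(sigma^d_i) not >= l *)
Definition Ilev (disp : Order.disp_t) (L : porderType disp)
  (N : nat) (K : {set {set 'I_N}})
  (sg : forall c : nat, 'I_(nsimp K c) -> {set 'I_N})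
  (mu : {set 'I_N} -> L) (d : nat) (l : L) : {set 'I_(nsimp K d.+1)} :=
  [set i | ~~ (l <= mu (sg d.+1 i))%O].

(* M c : columns = simplex coordinates of the basis E^H of the chains on
   simplices with c vertices (the paper's M^{Delta,H}_{c-1}).  The matrix of
   the boundary d_c w.r.t. these bases is (0_{* x r(c+1)} | D'_c), the only
   nonzero entries of D'_c being its first r(c) diagonal entries
   del c 0, ..., del c (r c - 1), successively dividing. Then r c is the
   rank of d_c (the boundary from c-chains, here simplices with c+1 vertices). *)
Definition reduced_bases (D : idomainType) (N : nat) (K : {set {set 'I_N}})
  (sg : forall c : nat, 'I_(nsimp K c) -> {set 'I_N})
  (M : forall c : nat, 'M[D]_(nsimp K c)) (r : nat -> nat) (del : nat -> nat -> D)
  : Prop :=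
  (forall c, M c \in unitmx) /\
  (forall c, (r c <= nsimp K c)%N /\ (r c.+1 + r c <= nsimp K c.+1)%N) /\
  (forall c (i : 'I_(nsimp K c)) (j : 'I_(nsimp K c.+1)),
      (invmx (M c) *m bdry D sg c *m M c.+1) i j =
      if [&& (r c.+1 <= j)%N, (nat_of_ord j == i + r c.+1)%N & (i < r c)%N]
      then del c i else 0) /\
  (forall c i, (i < r c)%N -> del c i != 0) /\
  (forall c i, (i.+1 < r c)%N -> dvdr (del c i) (del c i.+1)).

(* column selection A(:, f k) (f always in range in our uses) *)
Definition colsel (D : idomainType) (m n p : nat) (A : 'M[D]_(m, n))
  (f : 'I_p -> nat) : 'M[D]_(m, p) :=
  \matrix_(i, k) oapp (fun j : 'I_n => A i j) 0 (insub (f k)).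

Definition subrows (D : idomainType) (m n : nat) (I : {set 'I_m})
  (A : 'M[D]_(m, n)) : 'M[D]_(#|I|, n) :=
  \matrix_(k, j) A (enum_val k) j.

(* In dimension d (d-simplices have d+1 vertices, C_d <-> index d.+1):
   the basis vectors of E^H_d are columns of M d.+1, ordered U,T,R,F:
   columns j < r_{d+1} have zero image and row j of D_{d+1} contains the
   entry del d.+1 j (type U if it is a unit, type T otherwise);
   the next r_d columns are of type R, the rest of type F. *)
Definition n_U (D : idomainType) (r : nat -> nat) (del : nat -> nat -> D) (d : nat) : nat :=
  count (fun j => del d.+1 j \is a GRing.unit) (iota 0 (r d.+1)).
Definition n_T (D : idomainType) (r : nat -> nat) (del : nat -> nat -> D) (d : nat) : nat :=
  (r d.+1 - n_U r del d)%N.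
Definition n_F (N : nat) (K : {set {set 'I_N}}) (r : nat -> nat) (d : nat) : nat :=
  (nsimp K d.+1 - (r d.+1 + r d))%N.

Definition U_blk (D : idomainType) (N : nat) (K : {set {set 'I_N}})
  (M : forall c : nat, 'M[D]_(nsimp K c)) (r : nat -> nat) (del : nat -> nat -> D) (d : nat)
  : 'M[D]_(nsimp K d.+1, n_U r del d) :=
  colsel (M d.+1) (fun k => nat_of_ord k).
Definition T_blk (D : idomainType) (N : nat) (K : {set {set 'I_N}})
  (M : forall c : nat, 'M[D]_(nsimp K c)) (r : nat -> nat) (del : nat -> nat -> D) (d : nat)
  : 'M[D]_(nsimp K d.+1, n_T r del d) :=
  colsel (M d.+1) (fun k => (n_U r del d + k)%N).
Definition F_blk (D : idomainType) (N : nat) (K : {set {set 'I_N}})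
  (M : forall c : nat, 'M[D]_(nsimp K c)) (r : nat -> nat) (d : nat)
  : 'M[D]_(nsimp K d.+1, n_F K r d) :=
  colsel (M d.+1) (fun k => (r d.+1 + r d + k)%N).

(* a^d_k : the nonzero row entries of the T generators *)
Definition a_coef (D : idomainType) (r : nat -> nat) (del : nat -> nat -> D) (d : nat)
  (k : 'I_(n_T r del d)) : D := del d.+1 (n_U r del d + k)%N.
Definition A_mat (D : idomainType) (r : nat -> nat) (del : nat -> nat -> D) (d : nat)
  : 'M[D]_(n_T r del d) := diag_mx (\row_k a_coef k).

Definition G_mat (D : idomainType) (N : nat) (K : {set {set 'I_N}})
  (M : forall c : nat, 'M[D]_(nsimp K c)) (r : nat -> nat) (del : nat -> nat -> D) (d : nat)
  : 'M[D]_(nsimp K d.+1, n_U r del d + (n_T r del d + n_F K r d)) :=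
  row_mx (U_blk M r del d) (row_mx (T_blk M r del d) (F_blk M r d)).

Definition is_cycle (D : idomainType) (N : nat) (K : {set {set 'I_N}})
  (sg : forall c : nat, 'I_(nsimp K c) -> {set 'I_N}) (d : nat)
  (h : 'cV[D]_(nsimp K d.+1)) : Prop :=
  bdry D sg d *m h = 0.
Definition is_boundary (D : idomainType) (N : nat) (K : {set {set 'I_N}})
  (sg : forall c : nat, 'I_(nsimp K c) -> {set 'I_N}) (d : nat)
  (h : 'cV[D]_(nsimp K d.+1)) : Prop :=
  exists y : 'cV[D]_(nsimp K d.+2), h = bdry D sg d.+1 *m y.

Definition S_solvable (D : idomainType) (N : nat) (K : {set {set 'I_N}})
  (M : forall c : nat, 'M[D]_(nsimp K c)) (r : nat -> nat) (del : nat -> nat -> D) (d : nat)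
  (h : 'cV[D]_(nsimp K d.+1)) (I : {set 'I_(nsimp K d.+1)}) : Prop :=
  exists (ups : 'cV[D]_(n_U r del d)) (tau : 'cV[D]_(n_T r del d)),
    subrows I (row_mx (U_blk M r del d) (T_blk M r del d *m A_mat r del d)) *m col_mx ups tau
    = - subrows I h.

Definition in_Hdl (D : idomainType) (N : nat) (K : {set {set 'I_N}})
  (sg : forall c : nat, 'I_(nsimp K c) -> {set 'I_N})
  (disp : Order.disp_t) (L : porderType disp) (mu : {set 'I_N} -> L)
  (M : forall c : nat, 'M[D]_(nsimp K c)) (r : nat -> nat) (del : nat -> nat -> D)
  (d : nat) (l : L) (h : 'cV[D]_(nsimp K d.+1)) : Prop :=
  is_cycle sg h /\ S_solvable M r del h (Ilev sg mu d l).

(* In the reduced bases every boundary map is diagonal.  Hence a chain is a cycle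
   exactly when its R-coordinates vanish, i.e. it is U ups + T tau + F phi, and it is a
   boundary exactly when it is U ups + T (A tau): the diagonal entries attached to the
   U generators are units, because the divisibility chain puts all units first.  Thus
   S(h, I) is solvable iff h is homologous to a cycle z vanishing on the rows in I,
   i.e. to z = G (ups; tau; phi) with (ups; tau; phi) in the kernel of G_I; and
   passing from h to such a z changes each T-coordinate by a multiple of a_k and leaves
   the F-coordinates alone. *)

From HB Require Import structures.
From mathcomp Require Import all_boot all_order all_algebra.
From mathcomp Require Import zify ring.
Import Order.Theory GRing.Theory.
Local Open Scope ring_scope.
Set Implicit Arguments. Unset Strict Implicit.

Ltac lia_ifs := repeat match goal with |- context [if ?b then _ else _] =>
  (rewrite (_ : b = true); last by lia) || (rewrite (_ : b = false); last by lia) end.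

Section ColumnSlices.
Variable D : idomainType.

Definition colnth n (u : 'cV[D]_n) (j : nat) : D :=
  oapp (fun jj : 'I_n => u jj 0) 0 (insub j).

Lemma colnthE n (u : 'cV[D]_n) (j : 'I_n) : colnth u j = u j 0.
Proof. by rewrite /colnth; case: insubP => [jj _ /val_inj -> //|]; rewrite ltn_ord. Qed.

Lemma colnth_out n (u : 'cV[D]_n) (j : nat) : (n <= j)%N -> colnth u j = 0.
Proof. by move=> h; rewrite /colnth insubN // -leqNgt. Qed.

Lemma colnth0 n (j : nat) : colnth (0 : 'cV[D]_n) j = 0.
Proof. by rewrite /colnth; case: insubP => [jj _ _|_] /=; rewrite ?mxE. Qed.

Lemma colnthD n (u v : 'cV[D]_n) (j : nat) : colnth (u + v) j = colnth u j + colnth v j.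
Proof. by rewrite /colnth; case: insubP => [jj _ _|_] /=; rewrite ?mxE ?addr0. Qed.

Lemma colnth_scale n (x : 'cV[D]_n) (g : nat -> D) m :
  colnth (\col_k (x k 0 * g k)) m = colnth x m * g m.
Proof. by rewrite /colnth; case: insubP => [k _ <-|_] /=; rewrite ?mxE ?mul0r. Qed.

Lemma colnth_sum_indicator n (u : 'cV[D]_n) (j : nat) :
  colnth u j = \sum_(k < n) (nat_of_ord k == j)%:R * u k 0.
Proof.
rewrite (eq_bigr (fun k => if nat_of_ord k == j then u k 0 else 0)); last first.
  by move=> k _; case: eqP; rewrite ?mul1r ?mul0r.
rewrite -big_mkcond /colnth; case: insubP => [jj _ <-|hj] /=.
  by rewrite (big_pred1 jj) // => k /=; rewrite (inj_eq val_inj).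
by rewrite big_pred0 // => k; apply/negbTE; apply: contra hj => /eqP <-.
Qed.

Definition col_shift n p (s : nat) (x : 'cV[D]_p) : 'cV[D]_n :=
  \col_j (if (s <= j)%N then colnth x (j - s) else 0).

Definition col_slice n p (s : nat) (w : 'cV[D]_n) : 'cV[D]_p :=
  \col_k colnth w (s + k).

Lemma colnth_shift n p s (x : 'cV[D]_p) (j : nat) : (j < n)%N ->
  colnth (col_shift n s x) j = if (s <= j)%N then colnth x (j - s) else 0.
Proof. by move=> h; rewrite /colnth insubT /= mxE. Qed.

Lemma colnth_slice n p s (w : 'cV[D]_n) (m : nat) :
  colnth (col_slice p s w) m = if (m < p)%N then colnth w (s + m) else 0.
Proof. by rewrite /colnth; case: insubP => [k -> <-|/negbTE ->] /=; rewrite ?mxE. Qed.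

Lemma col_shiftE n p s (x : 'cV[D]_p) (j : 'I_n) :
  col_shift n s x j 0 = \sum_(k < p) (nat_of_ord j == s + k)%N%:R * x k 0.
Proof.
rewrite mxE; case: leqP => hs; last first.
  by rewrite big1 // => k _; case: eqP => [e|]; rewrite ?mul0r //; move: hs; rewrite e; lia.
rewrite colnth_sum_indicator; apply: eq_bigr => k _; congr (_%:R * _).
by apply/eqP/eqP; lia.
Qed.

Lemma colselE m n p (A : 'M[D]_(m, n)) (f : 'I_p -> nat) i k :
  colsel A f i k = \sum_(j < n) (nat_of_ord j == f k)%:R * A i j.
Proof.
rewrite mxE (eq_bigr (fun j => if nat_of_ord j == f k then A i j else 0)); last first.
  by move=> j _; case: eqP; rewrite ?mul1r ?mul0r.
rewrite -big_mkcond; case: insubP => [jj _ <-|hj] /=.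
  by rewrite (big_pred1 jj) // => j /=; rewrite (inj_eq val_inj).
by rewrite big_pred0 // => j; apply/negbTE; apply: contra hj => /eqP <-.
Qed.

Lemma colsel_shift_mul m n p s (A : 'M[D]_(m, n)) (x : 'cV[D]_p) :
  colsel A (fun k => (s + k)%N) *m x = A *m col_shift n s x.
Proof.
apply/matrixP => i z; rewrite ord1 !mxE.
under eq_bigr => k _ do rewrite colselE mulr_suml.
under [RHS]eq_bigr => j _ do rewrite col_shiftE mulr_sumr.
rewrite exchange_big /=; apply: eq_bigr => j _; apply: eq_bigr => k _.
by rewrite mulrCA mulrA.
Qed.

Lemma col_split3 n p q s t (w : 'cV[D]_n) :
  (p + q <= s)%N -> (n <= s + t)%N ->
  (forall j, (p + q <= j < s)%N -> colnth w j = 0) ->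
  w = col_shift n 0 (col_slice p 0 w) + col_shift n p (col_slice q p w)
      + col_shift n s (col_slice t s w).
Proof.
move=> hpq hn w0; apply/matrixP => j z; rewrite ord1 -[LHS]colnthE -[RHS]colnthE !colnthD.
rewrite !colnth_shift // !colnth_slice.
have := ltn_ord j; case: (ltnP j p) => c1;
  [|case: (ltnP j (p + q)) => c2; [|case: (ltnP j s) => c3]] => *;
  lia_ifs; rewrite ?add0r ?addr0 //; first [by apply: w0; lia | by f_equal; lia].
Qed.

Lemma subrows_mul m n p (I : {set 'I_m}) (A : 'M[D]_(m, n)) (x : 'M[D]_(n, p)) :
  subrows I A *m x = subrows I (A *m x).
Proof. by apply/matrixP => i j; rewrite !mxE; apply: eq_bigr => k _; rewrite mxE. Qed.

Lemma subrowsD m n (I : {set 'I_m}) (A B : 'M[D]_(m, n)) :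
  subrows I (A + B) = subrows I A + subrows I B.
Proof. by apply/matrixP => i j; rewrite !mxE. Qed.

End ColumnSlices.

Lemma dvdr_trans (D : idomainType) (a b c : D) : dvdr a b -> dvdr b c -> dvdr a c.
Proof. by move=> [x ->] [y ->]; exists (y * x); rewrite mulrA. Qed.

Lemma dvdr_unit (D : idomainType) (a b : D) :
  dvdr a b -> b \is a GRing.unit -> a \is a GRing.unit.
Proof. by move=> [x ->]; rewrite unitrM => /andP[]. Qed.

Lemma count_iota_le (p : pred nat) i n :
  (forall j, (i <= j < n)%N -> ~~ p j) -> (count p (iota 0 n) <= i)%N.
Proof.
move=> np; case: (leqP n i) => [hni|hin].
  by apply: leq_trans (count_size _ _) _; rewrite size_iota.
rewrite -(subnKC (ltnW hin)) iotaD count_cat add0n.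
rewrite (@eq_in_count _ _ pred0 (iota i (n - i))) ?count_pred0 ?addn0.
  by apply: leq_trans (count_size _ _) _; rewrite size_iota.
by move=> j; rewrite mem_iota => hj /=; apply/negbTE; apply: np; lia.
Qed.

Section ReducedBases.
Variables (D : idomainType) (N : nat) (K : {set {set 'I_N}}).
Variable sg : forall c : nat, 'I_(nsimp K c) -> {set 'I_N}.
Variable M : forall c : nat, 'M[D]_(nsimp K c).
Variables (r : nat -> nat) (del : nat -> nat -> D).
Hypothesis Hred : reduced_bases sg M r del.

Definition reduced_bdry c : 'M[D]_(nsimp K c, nsimp K c.+1) :=
  invmx (M c) *m bdry D sg c *m M c.+1.

Lemma M_unit c : M c \in unitmx.
Proof. by case: Hred. Qed.

Lemma bdry_reduced c : bdry D sg c = M c *m reduced_bdry c *m invmx (M c.+1).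
Proof.
by rewrite /reduced_bdry !mulmxA mulmxV ?M_unit // mul1mx -mulmxA mulmxV ?M_unit // mulmx1.
Qed.

Lemma reduced_bdry_mulE c (u : 'cV[D]_(nsimp K c.+1)) (i : 'I_(nsimp K c)) :
  (reduced_bdry c *m u) i 0 =
  if (i < r c)%N then del c i * colnth u (i + r c.+1) else 0.
Proof.
have [_ [_ [hD _]]] := Hred.
rewrite mxE; under eq_bigr => j _ do rewrite hD.
case: ifP => hi; last by rewrite big1 // => j _; rewrite !andbF mul0r.
rewrite colnth_sum_indicator mulr_sumr; apply: eq_bigr => j _.
case: eqP => [ej|_]; last by rewrite andbF !mul0r mulr0.
by rewrite ej leq_addl mul1r.
Qed.

Lemma del_dvdr c i j : (i <= j < r c)%N -> dvdr (del c i) (del c j).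
Proof.
have [_ [_ [_ [_ hdiv]]]] := Hred.
move=> /andP[hij hj]; rewrite -(subnKC hij) in hj *.
elim: (j - i)%N hj => [|k IH] hk; first by exists 1; rewrite addn0 mul1r.
apply: (dvdr_trans (IH _)); first lia.
by rewrite addnS; apply: hdiv; rewrite -addnS.
Qed.

(* The divisibility chain puts all unit entries of [del c] first. *)
Lemma del_unit_prefix c i :
  (i < count (fun j => del c j \is a GRing.unit) (iota 0 (r c)))%N ->
  del c i \is a GRing.unit.
Proof.
move=> hi; apply/negPn/negP => nui; move: hi; rewrite ltnNge => /negP; apply.
apply: count_iota_le => j hj; apply: contra nui; apply: dvdr_unit.
exact: del_dvdr.
Qed.

Lemma colnth_reduced_bdry_mul c (u : 'cV[D]_(nsimp K c.+1)) (i : nat) :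
  colnth (reduced_bdry c *m u) i =
  if (i < r c)%N then del c i * colnth u (i + r c.+1) else 0.
Proof.
have [_ [hr _]] := Hred; have [hrc _] := hr c.
case: (ltnP i (nsimp K c)) => hi; last first.
  by rewrite colnth_out // ifN // -leqNgt (leq_trans hrc).
by rewrite -[i]/(nat_of_ord (Ordinal hi)) colnthE reduced_bdry_mulE.
Qed.

Lemma is_cycle_reduced d (h : 'cV[D]_(nsimp K d.+1)) :
  is_cycle sg h <-> reduced_bdry d *m (invmx (M d.+1) *m h) = 0.
Proof.
rewrite /is_cycle bdry_reduced -!mulmxA; split => [E|->]; last by rewrite mulmx0.
by have := congr1 (mulmx (invmx (M d))) E; rewrite mulmx0 mulKmx ?M_unit.
Qed.

Lemma is_cycle_coords d (h : 'cV[D]_(nsimp K d.+1)) :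
  is_cycle sg h <-> forall j, (r d.+1 <= j < r d.+1 + r d)%N ->
     colnth (invmx (M d.+1) *m h) j = 0.
Proof.
have [_ [hr [_ [hnz _]]]] := Hred; have [hrd _] := hr d.
rewrite is_cycle_reduced; split => [E0 j hj|E0].
  have := congr1 (fun v => colnth v (j - r d.+1)%N) E0.
  rewrite colnth_reduced_bdry_mul colnth0 ifT ?subnK; try lia.
  by move/eqP; rewrite mulf_eq0 (negbTE (hnz _ _ _)) /=; [move/eqP | lia].
apply/matrixP => i k; rewrite ord1 -[LHS]colnthE colnth_reduced_bdry_mul mxE.
by case: ifP => // hi; rewrite E0 ?mulr0 //; lia.
Qed.

Lemma n_U_le d : (n_U r del d <= r d.+1)%N.
Proof. by apply: leq_trans (count_size _ _) _; rewrite size_iota. Qed.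

Lemma blocks_coords d ups tau phi :
  U_blk M r del d *m ups + T_blk M r del d *m tau + F_blk M r d *m phi =
  M d.+1 *m (col_shift _ 0 ups + col_shift _ (n_U r del d) tau
             + col_shift _ (r d.+1 + r d) phi).
Proof. by rewrite !mulmxDr -!colsel_shift_mul. Qed.

Lemma is_cycle_blocks d (h : 'cV[D]_(nsimp K d.+1)) :
  is_cycle sg h <-> exists ups tau phi,
    h = U_blk M r del d *m ups + T_blk M r del d *m tau + F_blk M r d *m phi.
Proof.
have [_ [hr _]] := Hred; have [_ hrd] := hr d; have hnU := n_U_le d.
rewrite is_cycle_coords; split => [E|[ups [tau [phi ->]]] j hj]; last first.
  rewrite blocks_coords mulKmx ?M_unit // !colnthD !colnth_shift; try lia.
  by lia_ifs; rewrite addr0 !colnth_out ?addr0 // /n_T; lia.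
set w := invmx (M d.+1) *m h.
exists (col_slice _ 0 w), (col_slice _ (n_U r del d) w), (col_slice _ (r d.+1 + r d) w).
rewrite blocks_coords -[LHS](mulKVmx (M_unit d.+1)); congr (_ *m _).
by apply: col_split3 => [||j]; rewrite /n_T /n_F => *; try apply: E; lia.
Qed.

Lemma is_boundary_reduced d (b : 'cV[D]_(nsimp K d.+1)) :
  is_boundary sg b <-> exists u, invmx (M d.+1) *m b = reduced_bdry d.+1 *m u.
Proof.
split => [[y ->]|[u Eu]].
  by exists (invmx (M d.+2) *m y); rewrite /reduced_bdry !mulmxA mulmxK ?M_unit.
exists (M d.+2 *m u); rewrite -[LHS](mulKVmx (M_unit d.+1)) Eu /reduced_bdry.
by rewrite !mulmxA mulmxV ?M_unit // mul1mx.
Qed.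

Lemma colnth_A_mat d (tau : 'cV[D]_(n_T r del d)) m :
  colnth (A_mat r del d *m tau) m =
  if (m < n_T r del d)%N then del d.+1 (n_U r del d + m) * colnth tau m else 0.
Proof.
rewrite /colnth; case: insubP => [k -> <-|/negbTE ->] //=.
by rewrite mul_diag_mx !mxE.
Qed.

Lemma boundary_blocks_coords d ups tau :
  U_blk M r del d *m ups + T_blk M r del d *m (A_mat r del d *m tau) =
  M d.+1 *m (col_shift _ 0 ups + col_shift _ (n_U r del d) (A_mat r del d *m tau)).
Proof. by rewrite !mulmxDr -!colsel_shift_mul. Qed.

Lemma is_boundary_blocks d (b : 'cV[D]_(nsimp K d.+1)) :
  is_boundary sg b <-> exists ups tau,
    b = U_blk M r del d *m ups + T_blk M r del d *m (A_mat r del d *m tau).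
Proof.
have [_ [hr _]] := Hred; have [_ hr2] := hr d.+1; have hnU := n_U_le d.
rewrite is_boundary_reduced; split => [[u Eu]|[ups [tau ->]]].
  exists (col_slice _ 0 (invmx (M d.+1) *m b)), (col_slice _ (r d.+2 + n_U r del d) u).
  rewrite boundary_blocks_coords -[LHS](mulKVmx (M_unit d.+1)); congr (_ *m _).
  apply/matrixP => j z; rewrite ord1 -[LHS]colnthE -[RHS]colnthE colnthD.
  rewrite !colnth_shift // colnth_A_mat !colnth_slice !Eu !colnth_reduced_bdry_mul /n_T.
  have := ltn_ord j; case: (ltnP j (n_U r del d)) => c1 *.
    by lia_ifs; rewrite addr0; f_equal; f_equal; lia.
  by case: (ltnP j (r d.+1)) => c2; lia_ifs; rewrite ?add0r //; f_equal; f_equal; lia.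
(* Dividing by the unit entries [del d.+1 j], [j < n_U], realises any U-part. *)
pose v := \col_k (ups k 0 / del d.+1 k).
exists (col_shift _ (r d.+2) v + col_shift _ (r d.+2 + n_U r del d) tau).
rewrite boundary_blocks_coords mulKmx ?M_unit //.
apply/matrixP => j z; rewrite ord1 -[LHS]colnthE -[RHS]colnthE colnthD.
rewrite !colnth_shift // colnth_A_mat colnth_reduced_bdry_mul /n_T.
have := ltn_ord j; case: (ltnP j (r d.+1)) => c2 *; last first.
  by lia_ifs; rewrite colnth_out ?add0r //; lia.
rewrite colnthD !colnth_shift; try lia.
rewrite /v (colnth_scale ups (fun m => (del d.+1 m)^-1)).
case: (ltnP j (n_U r del d)) => c1; lia_ifs.
  rewrite !addr0 subn0 addnK mulrC divrK //; exact: del_unit_prefix.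
rewrite !(@colnth_out _ _ ups) ?mul0r ?add0r; try lia.
by f_equal; f_equal; lia.
Qed.

Lemma is_cycle_boundary d (b : 'cV[D]_(nsimp K d.+1)) : is_boundary sg b -> is_cycle sg b.
Proof.
move=> /is_boundary_blocks [ups [tau ->]]; apply/is_cycle_blocks.
by exists ups, (A_mat r del d *m tau), 0; rewrite mulmx0 addr0.
Qed.

Lemma S_solvable_boundary d (h : 'cV[D]_(nsimp K d.+1)) I :
  S_solvable M r del h I <-> exists b, is_boundary sg b /\ subrows I (b + h) = 0.
Proof.
rewrite /S_solvable; split => [[ups [tau E]]|[b [/is_boundary_blocks [ups [tau ->]] E]]].
  exists (U_blk M r del d *m ups + T_blk M r del d *m (A_mat r del d *m tau)).
  split; first by apply/is_boundary_blocks; exists ups, tau.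
  by rewrite subrowsD mulmxA -mul_row_col -subrows_mul E addNr.
exists ups, tau; apply/eqP; rewrite subrows_mul mul_row_col -mulmxA -addr_eq0.
by rewrite -subrowsD E.
Qed.

Lemma G_mat_mul d (I : {set 'I_(nsimp K d.+1)})
    (ups : 'cV[D]_(n_U r del d)) (tau : 'cV[D]_(n_T r del d)) (phi : 'cV[D]_(n_F K r d)) :
  subrows I (G_mat M r del d) *m col_mx ups (col_mx tau phi) =
  subrows I (U_blk M r del d *m ups + T_blk M r del d *m tau + F_blk M r d *m phi).
Proof. by rewrite subrows_mul /G_mat !mul_row_col addrA. Qed.

Lemma S_solvable_kernel d (h : 'cV[D]_(nsimp K d.+1)) I :
  is_cycle sg h ->
  S_solvable M r del h I <->
  exists z, [/\ is_cycle sg z, is_boundary sg (z - h) &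
    exists ups tau phi,
      z = U_blk M r del d *m ups + T_blk M r del d *m tau + F_blk M r d *m phi /\
      subrows I (G_mat M r del d) *m col_mx ups (col_mx tau phi) = 0].
Proof.
move=> hc; rewrite S_solvable_boundary.
split => [[b [bb E]]|[z [_ zb [ups [tau [phi [Ez EG]]]]]]]; last first.
  by exists (z - h); rewrite subrK -EG G_mat_mul -Ez.
have zc : is_cycle sg (b + h).
  by rewrite /is_cycle mulmxDr (is_cycle_boundary bb) hc addr0.
have [ups [tau [phi Ez]]] := (is_cycle_blocks (b + h)).1 zc.
exists (b + h); split; rewrite ?addrK //.
by exists ups, tau, phi; rewrite G_mat_mul -Ez.
Qed.

Lemma S_solvable_coords d (h : 'cV[D]_(nsimp K d.+1)) I ups_h tau_h phi_h :
  h = U_blk M r del d *m ups_h + T_blk M r del d *m tau_h + F_blk M r d *m phi_h ->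
  S_solvable M r del h I <->
  exists ups tau phi,
    [/\ subrows I (G_mat M r del d) *m col_mx ups (col_mx tau phi) = 0,
        (forall k, dvdr (a_coef k) (tau k 0 - tau_h k 0)) & phi = phi_h].
Proof.
move=> Eh; rewrite S_solvable_boundary.
split => [[b [/is_boundary_blocks [ups [tau Eb]] E]]|[ups [tau [phi [EG Ediv Ephi]]]]].
  exists (ups_h + ups), (tau_h + A_mat r del d *m tau), phi_h; split => //.
    rewrite G_mat_mul -E Eb Eh; congr (subrows _ _); rewrite !mulmxDr.
    by apply/matrixP => i j; rewrite !mxE; ring.
  move=> k; exists (tau k 0).
  by rewrite mxE addrAC subrr add0r mul_diag_mx !mxE mulrC.
have [c Ec] := fin_all_exists Ediv.
exists (U_blk M r del d *m (ups - ups_h) + T_blk M r del d *m (A_mat r del d *m \col_k c k)).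
split; first by apply/is_boundary_blocks; exists (ups - ups_h), (\col_k c k).
have -> : A_mat r del d *m \col_k c k = tau - tau_h.
  by apply/matrixP => k z; rewrite ord1 mul_diag_mx !mxE Ec mulrC.
rewrite -EG G_mat_mul Eh Ephi; congr (subrows _ _); rewrite !mulmxBr.
by apply/matrixP => i j; rewrite !mxE; ring.
Qed.

End ReducedBases.

Theorem mainTheorem17
  (D : idomainType) (N : nat) (K : {set {set 'I_N}})
  (sg : forall c : nat, 'I_(nsimp K c) -> {set 'I_N})
  (disp : Order.disp_t) (L : bDistrLatticeType disp) (mu : {set 'I_N} -> L)
  (M : forall c : nat, 'M[D]_(nsimp K c)) (r : nat -> nat) (del : nat -> nat -> D)
  (d : nat) (l : L) :
  is_PID D ->
  is_simplicial_complex K ->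
  is_numbering sg ->
  complete_lattice L ->
  fuzzy_subcomplex K mu ->
  reduced_bases sg M r del ->
  (forall h : 'cV[D]_(nsimp K d.+1),
     is_cycle sg h ->
     (in_Hdl sg mu M r del l h <->
      exists z : 'cV[D]_(nsimp K d.+1),
        [/\ is_cycle sg z, is_boundary sg (z - h) &
         exists (ups : 'cV[D]_(n_U r del d)) (tau : 'cV[D]_(n_T r del d))
                (phi : 'cV[D]_(n_F K r d)),
           z = U_blk M r del d *m ups + T_blk M r del d *m tau + F_blk M r d *m phi /\
           subrows (Ilev sg mu d l) (G_mat M r del d) *m col_mx ups (col_mx tau phi) = 0])) /\
  (forall (h : 'cV[D]_(nsimp K d.+1))
          (ups_h : 'cV[D]_(n_U r del d)) (tau_h : 'cV[D]_(n_T r del d))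
          (phi_h : 'cV[D]_(n_F K r d)),
     h = U_blk M r del d *m ups_h + T_blk M r del d *m tau_h + F_blk M r d *m phi_h ->
     (in_Hdl sg mu M r del l h <->
      exists (ups : 'cV[D]_(n_U r del d)) (tau : 'cV[D]_(n_T r del d))
             (phi : 'cV[D]_(n_F K r d)),
        [/\ subrows (Ilev sg mu d l) (G_mat M r del d) *m col_mx ups (col_mx tau phi) = 0,
            (forall k : 'I_(n_T r del d), dvdr (a_coef k) (tau k 0 - tau_h k 0)) &
            phi = phi_h])).
Proof.
move=> _ _ _ _ _ Hred; split => [h hc|h ups_h tau_h phi_h Eh].
  by have := S_solvable_kernel Hred (Ilev sg mu d l) hc; rewrite /in_Hdl; tauto.
have hc : is_cycle sg h by apply/(is_cycle_blocks Hred); exists ups_h, tau_h, phi_h.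
by have := S_solvable_coords Hred (Ilev sg mu d l) Eh; rewrite /in_Hdl; tauto.
Qed.
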